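(* Let $k \geq 1$ and let $\{b_j, b_j^\perp\}$, $j = 0,1,\ldots,2k+1$, be orthonormal bases of $\mathbb{C}^2$ (so $\langle b_j, b_j^\perp\rangle = 0$) such that for all $i \neq j$ the quantities $|\langle b_i,b_j\rangle|$, $|\langle b_i,b_j^\perp\rangle|$, $|\langle b_i^\perp,b_j\rangle|$, $|\langle b_i^\perp,b_j^\perp\rangle|$ all lie outside $\{0,1\}$. For $0 \leq j \leq k$ define vectors in $\mathbb{C}^2\otimes\mathbb{C}^2$: $$v_{2j} := b_j \otimes b_{2j}^\perp,\quad v_{2j+1} := b_j^\perp \otimes b_{(2j+2) \bmod (2k+2)},\quad w_{2j} := b_j^\perp \otimes b_{2j+1}^\perp,\quad w_{2j+1} := b_j \otimes b_{(2j+3) \bmod (2k+2)}.$$ Then: (a) the orthogonality graph of $\{v_0,\ldots,v_{2k+1},w_0,\ldots,w_{2k+1}\}$ is the prism graph $Y_{4k+4}$, i.e. $v_i$ and $v_j$ (respectively $w_i$ and $w_j$) are orthogonal iff $j - i \equiv \pm 1 \pmod{2k+2}$, and $v_i$ and $w_j$ are orthogonal iff $i = j$; (b) every nonzero product vector $x \otimes y \in \mathbb{C}^2\otimes\mathbb{C}^2$ is orthogonal to at most $3$ of the $4k+4$ vectors $v_0,\ldots,v_{2k+1},w_0,\ldots,w_{2k+1}$.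
   Context: The orthogonality graph of a finite list of vectors is the simple graph whose vertices are the vectors and in which two distinct vertices are adjacent iff the corresponding vectors are orthogonal. For product vectors, $x_1\otimes x_2$ and $y_1\otimes y_2$ are orthogonal iff $\langle x_1,y_1\rangle = 0$ or $\langle x_2,y_2\rangle = 0$. *)

(* C^2 is modelled as 'cV[C]_2 over an arbitrary
   numClosedFieldType C (e.g. the complex numbers); C^2 (x) C^2 is
   modelled as 2x2 matrices, with x (x) y := the outer product. *)
From HB Require Import structures.
From mathcomp Require Import all_boot all_order all_algebra.
Set Implicit Arguments. Unset Strict Implicit. Unset Printing Implicit Defensive.
Import Order.TTheory GRing.Theory Num.Theory.
Local Open Scope ring_scope.

Definition dot2 {C : numClosedFieldType} (x y : 'cV[C]_2) : C :=
  \sum_(i < 2) (x i 0)^* * y i 0.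

Definition tens {C : numClosedFieldType} (x y : 'cV[C]_2) : 'M[C]_2 :=
  \matrix_(i, j) (x i 0 * y j 0).

Definition dotT {C : numClosedFieldType} (A B : 'M[C]_2) : C :=
  \sum_(i < 2) \sum_(j < 2) (A i j)^* * B i j.

Definition orthT {C : numClosedFieldType} (A B : 'M[C]_2) : bool :=
  dotT A B == 0.

(* The vectors v_n, w_n (0 <= n <= 2k+1), given the bases {b_j, bp_j}.
   n = 2j   : v = b_j (x) bp_{2j},        w = bp_j (x) bp_{2j+1}
   n = 2j+1 : v = bp_j (x) b_{(2j+2) mod (2k+2)}, w = b_j (x) b_{(2j+3) mod (2k+2)} *)
Definition vvec {C : numClosedFieldType} (k : nat) (b bp : nat -> 'cV[C]_2)
  (n : nat) : 'M[C]_2 :=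
  if odd n then tens (bp n./2) (b ((n.+1) %% (2 * k + 2))%N)
  else tens (b n./2) (bp n).

Definition wvec {C : numClosedFieldType} (k : nat) (b bp : nat -> 'cV[C]_2)
  (n : nat) : 'M[C]_2 :=
  if odd n then tens (b n./2) (b ((n.+2) %% (2 * k + 2))%N)
  else tens (bp n./2) (bp n.+1).

From HB Require Import structures.
From mathcomp Require Import all_boot all_order all_algebra.
From mathcomp Require Import zify ring.
Set Implicit Arguments. Unset Strict Implicit. Unset Printing Implicit Defensive.
Import Order.TTheory GRing.Theory Num.Theory.

(* Every vertex v_n, w_n is a pure tensor  lab l1 (x) lab l2  of two
   "labelled" basis vectors, where the label (t, m) : bool * nat names b_m if t
   and bp_m otherwise.  Since <x1 (x) x2, y1 (x) y2> = <x1, y1> <x2, y2>, all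
   orthogonality questions reduce to the two tensor factors.
   - Genericity of the bases says: two labelled vectors with indices < 2k+2 are
     orthogonal iff they are "partners" (b_m and bp_m), and otherwise their inner
     product has modulus different from 1.
   - In C^2, two unit vectors orthogonal to a common nonzero x are proportional,
     so their inner product has modulus 1 (Lagrange's identity); hence a nonzero
     x is orthogonal to at most one labelled vector.
   Part (a) then becomes pure index arithmetic on the labels (first section).
   For part (b), x (x) y is orthogonal to v_i iff x is orthogonal to the first
   label of v_i or y to the second; the first labels of the v_i are pairwise
   distinct (same for the w_i), and the second labels of all v_i and w_i together
   are pairwise distinct, which yields the bound 1 + 1 + 1 = 3. *)

(* [partners l l'] : l and l' name the two vectors b_m, bp_m of one basis. *)
Definition partners (l l' : bool * nat) : bool := (l.2 == l'.2) && (l.1 != l'.1).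

(* The labels of the two tensor factors of v_n and w_n (modulus M = 2k+2). *)
Definition fstV (n : nat) : bool * nat := (~~ odd n, n./2).
Definition fstW (n : nat) : bool * nat := (odd n, n./2).
Definition sndV (M n : nat) : bool * nat := (odd n, if odd n then n.+1 %% M else n).
Definition sndW (M n : nat) : bool * nat := (odd n, if odd n then n.+2 %% M else n.+1).

Lemma not_partners_same_index (l l' : bool * nat) :
  l.2 = l'.2 -> ~~ partners l l' -> l = l'.
Proof. by case: l l' => [t m] [t' m'] /= <-; rewrite /partners /= eqxx negbK => /eqP ->. Qed.

Lemma mod_lt_double (x M : nat) : x < M + M -> x %% M = if x < M then x else x - M.
Proof.
move=> h; case: ifP => hx; first by rewrite modn_small.
have -> : x = (x - M) + M by lia.
by rewrite modnDr modn_small; lia.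
Qed.

Lemma parity_split (n : nat) : exists (p : bool) (a : nat), n = p + a.*2.
Proof. by exists (odd n), n./2; rewrite odd_double_half. Qed.

(* All index facts below are decided by writing i = p + 2a, j = q + 2c, splitting
   on the parities p, q and on the wrap-around of the modulus, then using lia. *)
Ltac parity_cases i j :=
  let p := fresh "p" in let a := fresh "a" in
  let q := fresh "q" in let c := fresh "c" in
  have [p [a ?]] := parity_split i; have [q [c ?]] := parity_split j; subst i j;
  rewrite /partners /fstV /fstW /sndV /sndW /= ?xpair_eqE
          ?oddD ?odd_double ?half_bit_double ?mod_lt_double; try lia;
  rewrite -?addnn;
  destruct p, q; simpl in *; (repeat case: ifP => ?); lia.

Section LabelArithmetic.
Variable k : nat.
Local Notation M := (2 * k + 2).

Lemma prism_vv i j : i < M -> j < M -> i <> j ->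
  partners (fstV i) (fstV j) || partners (sndV M i) (sndV M j)
  <-> (j = i.+1 %[mod M] \/ i = j.+1 %[mod M]).
Proof. move=> hi hj hij; parity_cases i j. Qed.

Lemma prism_ww i j : i < M -> j < M -> i <> j ->
  partners (fstW i) (fstW j) || partners (sndW M i) (sndW M j)
  <-> (j = i.+1 %[mod M] \/ i = j.+1 %[mod M]).
Proof. move=> hi hj hij; parity_cases i j. Qed.

Lemma prism_vw i j : i < M -> j < M ->
  partners (fstV i) (fstW j) || partners (sndV M i) (sndW M j) <-> i = j.
Proof. move=> hi hj; parity_cases i j. Qed.

Lemma sndV_inj : {in gtn M &, injective (sndV M)}.
Proof.
move=> i j hi hj /eqP; apply: contraTeq => hij; rewrite !inE in hi hj.
parity_cases i j.
Qed.

Lemma sndW_inj : {in gtn M &, injective (sndW M)}.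
Proof.
move=> i j hi hj /eqP; apply: contraTeq => hij; rewrite !inE in hi hj.
parity_cases i j.
Qed.

Lemma sndV_neq_sndW i j : i < M -> j < M -> sndV M i != sndW M j.
Proof. move=> hi hj; parity_cases i j. Qed.

Lemma label_bounds i : i < M -> [/\ (fstV i).2 < M, (fstW i).2 < M,
  (sndV M i).2 < M & (sndW M i).2 < M].
Proof.
have [p [a ->]] := parity_split i; rewrite /fstV /fstW /sndV /sndW /=.
rewrite oddD odd_double half_bit_double -addnn => hi.
by destruct p; split; rewrite //= ?mod_lt_double; try case: ifP; lia.
Qed.
End LabelArithmetic.

Lemma fstV_inj : injective fstV.
Proof. move=> i j /eqP; apply: contraTeq => hij; parity_cases i j. Qed.

Lemma fstW_inj : injective fstW.
Proof. move=> i j /eqP; apply: contraTeq => hij; parity_cases i j. Qed.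

Local Open Scope ring_scope.

Lemma sum2 (C : numClosedFieldType) (F : 'I_2 -> C) : \sum_(i < 2) F i = F 0 + F 1.
Proof. by rewrite !big_ord_recl big_ord0 addr0; congr (_ + F _); apply: val_inj. Qed.

Lemma dot2C (C : numClosedFieldType) (x y : 'cV[C]_2) : dot2 y x = (dot2 x y)^*.
Proof. by rewrite /dot2 !sum2 rmorphD !rmorphM /= !conjCK; ring. Qed.

Lemma dotT_tens (C : numClosedFieldType) (x y u w : 'cV[C]_2) :
  dotT (tens x y) (tens u w) = dot2 x u * dot2 y w.
Proof. by rewrite /dotT /dot2 !sum2 !mxE !rmorphM /=; ring. Qed.

Lemma orthT_tens (C : numClosedFieldType) (x y u w : 'cV[C]_2) :
  orthT (tens x y) (tens u w) = (dot2 x u == 0) || (dot2 y w == 0).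
Proof. by rewrite /orthT dotT_tens mulf_eq0. Qed.

Lemma cV2_eq0 (C : numClosedFieldType) (x : 'cV[C]_2) :
  (x == 0) = (x 0 0 == 0) && (x 1 0 == 0).
Proof.
apply/eqP/andP => [->|[/eqP x0 /eqP x1]]; first by rewrite !mxE.
apply/matrixP => i j; rewrite !ord1 mxE.
by case: i => [[|[|//]] hi]; [rewrite -x0 | rewrite -x1]; congr (x _ _); apply: val_inj.
Qed.

Lemma tens_neq0 (C : numClosedFieldType) (x y : 'cV[C]_2) :
  tens x y != 0 -> x != 0 /\ y != 0.
Proof.
move=> hxy; split; apply: contraNneq hxy => ->;
  by apply/eqP/matrixP => i j; rewrite !mxE ?mul0r ?mulr0.
Qed.

Lemma det_of_common_orth (C : numClosedFieldType) (x u u' : 'cV[C]_2) :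
  x != 0 -> dot2 x u = 0 -> dot2 x u' = 0 ->
  u 0 0 * u' 1 0 - u 1 0 * u' 0 0 = 0.
Proof.
rewrite cV2_eq0 negb_and => hx hu hu'.
set d := _ - _.
have d_x0 : d * (x 0 0)^* = u' 1 0 * dot2 x u - u 1 0 * dot2 x u'.
  by rewrite /d /dot2 !sum2; ring.
have d_x1 : d * (x 1 0)^* = u 0 0 * dot2 x u' - u' 0 0 * dot2 x u.
  by rewrite /d /dot2 !sum2; ring.
rewrite hu hu' !mulr0 subrr in d_x0 d_x1.
by case/orP: hx => hx; apply/eqP; [move/eqP: d_x0 | move/eqP: d_x1];
  rewrite mulf_eq0 conjC_eq0 (negPf hx) orbF.
Qed.

Lemma lagrange_identity2 (C : numClosedFieldType) (u u' : 'cV[C]_2) :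
  `|dot2 u u'| ^+ 2 =
  dot2 u u * dot2 u' u' - `|u 0 0 * u' 1 0 - u 1 0 * u' 0 0| ^+ 2.
Proof. by rewrite !normCK /dot2 !sum2 !(rmorphD, rmorphB, rmorphM) /= !conjCK; ring. Qed.

Lemma common_orth_norm (C : numClosedFieldType) (x u u' : 'cV[C]_2) :
  x != 0 -> dot2 x u = 0 -> dot2 x u' = 0 ->
  `|dot2 u u'| ^+ 2 = dot2 u u * dot2 u' u'.
Proof.
move=> hx hu hu'.
by rewrite lagrange_identity2 (det_of_common_orth hx hu hu') normr0 expr0n subr0.
Qed.

Definition lab (C : numClosedFieldType) (b bp : nat -> 'cV[C]_2) (l : bool * nat) :
  'cV[C]_2 := if l.1 then b l.2 else bp l.2.

Lemma vvec_lab (C : numClosedFieldType) k (b bp : nat -> 'cV[C]_2) n :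
  vvec k b bp n = tens (lab b bp (fstV n)) (lab b bp (sndV (2 * k + 2) n)).
Proof. by rewrite /vvec /lab /=; case: (odd n). Qed.

Lemma wvec_lab (C : numClosedFieldType) k (b bp : nat -> 'cV[C]_2) n :
  wvec k b bp n = tens (lab b bp (fstW n)) (lab b bp (sndW (2 * k + 2) n)).
Proof. by rewrite /wvec /lab /=; case: (odd n). Qed.

Definition orth_idx (C : numClosedFieldType) (M : nat) (x : 'cV[C]_2)
  (u : nat -> 'cV[C]_2) : {set 'I_M} := [set i : 'I_M | dot2 x (u i) == 0].

Section GenericBases.
Variables (C : numClosedFieldType) (M : nat) (b bp : nat -> 'cV[C]_2).
Hypothesis hnorm : forall j, (j < M)%N -> dot2 (b j) (b j) = 1.
Hypothesis hnormp : forall j, (j < M)%N -> dot2 (bp j) (bp j) = 1.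
Hypothesis horth : forall j, (j < M)%N -> dot2 (b j) (bp j) = 0.
Hypothesis hgen : forall i j, (i < M)%N -> (j < M)%N -> i <> j ->
  [/\ `|dot2 (b i) (b j)| \notin [:: 0; 1], `|dot2 (b i) (bp j)| \notin [:: 0; 1],
      `|dot2 (bp i) (b j)| \notin [:: 0; 1] & `|dot2 (bp i) (bp j)| \notin [:: 0; 1]].

Local Notation lab := (lab b bp).
Local Notation ok l := (l.2 < M)%N.

Lemma lab_norm l : ok l -> dot2 (lab l) (lab l) = 1.
Proof. by case: l => [[] m] /= hm; rewrite /lab /=; [apply: hnorm | apply: hnormp]. Qed.

Lemma lab_partners_orth l l' : ok l -> ok l' -> partners l l' -> dot2 (lab l) (lab l') = 0.
Proof.
case: l l' => [t m] [t' m'] /= hm _ /andP[/= /eqP <- ht].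
case: t t' ht => [] [] //= _; rewrite /lab /=; first exact: horth.
by rewrite dot2C horth ?conjC0.
Qed.

Lemma lab_dot_generic l l' : ok l -> ok l' -> l.2 != l'.2 ->
  `|dot2 (lab l) (lab l')| \notin [:: 0; 1].
Proof.
case: l l' => [t m] [t' m'] /= hm hm' /eqP hne.
have [g1 g2 g3 g4] := hgen hm hm' hne.
by case: t; case: t'; rewrite /lab.
Qed.

Lemma lab_orthE l l' : ok l -> ok l' -> (dot2 (lab l) (lab l') == 0) = partners l l'.
Proof.
move=> hl hl'; apply/idP/idP => [h|/(lab_partners_orth hl hl') -> //].
case: (eqVneq l.2 l'.2) => [e|hne]; last first.
  by move: (lab_dot_generic hl hl' hne); rewrite (eqP h) normr0 inE eqxx.
apply/negPn/negP => /(not_partners_same_index e) el.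
by move: h; rewrite el lab_norm // oner_eq0.
Qed.

Lemma lab_dot_norm_neq1 l l' : ok l -> ok l' -> l != l' ->
  `|dot2 (lab l) (lab l')| != 1.
Proof.
move=> hl hl' hne; case: (eqVneq l.2 l'.2) => [e|hne2]; last first.
  by move: (lab_dot_generic hl hl' hne2); rewrite !inE negb_or => /andP[].
case: (boolP (partners l l')) => [hp|/(not_partners_same_index e) el].
  by rewrite lab_partners_orth // normr0 eq_sym oner_eq0.
by rewrite el eqxx in hne.
Qed.

Lemma orth_lab_unique (x : 'cV[C]_2) l l' : x != 0 -> ok l -> ok l' ->
  dot2 x (lab l) = 0 -> dot2 x (lab l') = 0 -> l = l'.
Proof.
move=> hx hl hl' hxl hxl'; apply/eqP/negPn/negP => /(lab_dot_norm_neq1 hl hl').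
have := common_orth_norm hx hxl hxl'; rewrite !lab_norm // mulr1 => /eqP.
rewrite sqrf_eq1 => /orP[/eqP -> | /eqP em1]; first by rewrite eqxx.
by move: (normr_ge0 (dot2 (lab l) (lab l'))); rewrite em1 oppr_ge0 ler10.
Qed.

Lemma card_orth_lab_le1 (x : 'cV[C]_2) (f : nat -> bool * nat) : x != 0 ->
  (forall i, i < M -> ok (f i))%N -> {in gtn M &, injective f} ->
  (#|orth_idx M x (lab \o f)| <= 1)%N.
Proof.
move=> hx hf finj; rewrite leqNgt; apply/negP => /card_gt1P [i [j [hi hj /negP]]].
apply; rewrite !inE in hi hj; apply/eqP/val_inj/finj; rewrite ?inE ?ltn_ord //.
exact: orth_lab_unique hx (hf _ (ltn_ord i)) (hf _ (ltn_ord j)) (eqP hi) (eqP hj).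
Qed.

Lemma card_orth_lab2_le1 (x : 'cV[C]_2) (f g : nat -> bool * nat) : x != 0 ->
  (forall i, i < M -> ok (f i))%N -> (forall i, i < M -> ok (g i))%N ->
  {in gtn M &, injective f} -> {in gtn M &, injective g} ->
  (forall i j, i < M -> j < M -> f i != g j)%N ->
  (#|orth_idx M x (lab \o f)| + #|orth_idx M x (lab \o g)| <= 1)%N.
Proof.
move=> hx hf hg finj ginj fg.
case: (posnP #|orth_idx M x (lab \o f)|) => [->|/card_gt0P[i]].
  exact: card_orth_lab_le1.
rewrite inE => /eqP hi.
suff -> : orth_idx M x (lab \o g) = set0.
  by rewrite cards0 addn0 card_orth_lab_le1.
apply/setP => j; rewrite !inE; apply/negP => /eqP hj.
have := fg i j (ltn_ord i) (ltn_ord j).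
by rewrite (orth_lab_unique hx (hf _ (ltn_ord i)) (hg _ (ltn_ord j)) hi hj) eqxx.
Qed.
End GenericBases.

Theorem mainTheorem8 (C : numClosedFieldType) (k : nat) (b bp : nat -> 'cV[C]_2)
  (hk : (1 <= k)%N)
  (hnorm : forall j, (j < 2 * k + 2)%N -> dot2 (b j) (b j) = 1)
  (hnormp : forall j, (j < 2 * k + 2)%N -> dot2 (bp j) (bp j) = 1)
  (horth : forall j, (j < 2 * k + 2)%N -> dot2 (b j) (bp j) = 0)
  (hgen : forall i j, (i < 2 * k + 2)%N -> (j < 2 * k + 2)%N -> i <> j ->
     [/\ `|dot2 (b i) (b j)| \notin [:: 0; 1],
         `|dot2 (b i) (bp j)| \notin [:: 0; 1],
         `|dot2 (bp i) (b j)| \notin [:: 0; 1] &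
         `|dot2 (bp i) (bp j)| \notin [:: 0; 1]]) :
  (* (a) the orthogonality graph is the prism graph Y_{4k+4} *)
  ((forall i j, (i < 2 * k + 2)%N -> (j < 2 * k + 2)%N -> i <> j ->
      (orthT (vvec k b bp i) (vvec k b bp j) <->
         (j = i.+1 %[mod 2 * k + 2] \/ i = j.+1 %[mod 2 * k + 2])) /\
      (orthT (wvec k b bp i) (wvec k b bp j) <->
         (j = i.+1 %[mod 2 * k + 2] \/ i = j.+1 %[mod 2 * k + 2]))) /\
   (forall i j, (i < 2 * k + 2)%N -> (j < 2 * k + 2)%N ->
      (orthT (vvec k b bp i) (wvec k b bp j) <-> i = j)))
  /\
  (* (b) a nonzero product vector is orthogonal to at most 3 of them *)
  (forall x y : 'cV[C]_2, tens x y != 0 ->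
     (#|[set i : 'I_(2 * k + 2) | orthT (tens x y) (vvec k b bp i)]|
      + #|[set i : 'I_(2 * k + 2) | orthT (tens x y) (wvec k b bp i)]| <= 3)%N).
Proof.
set M := (2 * k + 2)%N.
have orthE := lab_orthE hnorm hnormp horth hgen.
split; first split.
- move=> i j hi hj hij.
  have [? ? ? ?] := label_bounds hi; have [? ? ? ?] := label_bounds hj.
  rewrite !vvec_lab !wvec_lab !orthT_tens !orthE //.
  by split; [apply: prism_vv | apply: prism_ww].
- move=> i j hi hj.
  have [? ? ? ?] := label_bounds hi; have [? ? ? ?] := label_bounds hj.
  by rewrite vvec_lab wvec_lab orthT_tens !orthE //; apply: prism_vw.
move=> x y /tens_neq0 [hx hy].
have -> : [set i : 'I_M | orthT (tens x y) (vvec k b bp i)] =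
    orth_idx M x (lab b bp \o fstV) :|: orth_idx M y (lab b bp \o sndV M).
  by apply/setP => i; rewrite !inE vvec_lab orthT_tens.
have -> : [set i : 'I_M | orthT (tens x y) (wvec k b bp i)] =
    orth_idx M x (lab b bp \o fstW) :|: orth_idx M y (lab b bp \o sndW M).
  by apply/setP => i; rewrite !inE wvec_lab orthT_tens.
have card1 := card_orth_lab_le1 hnorm hnormp horth hgen hx.
have fstV1 : (#|orth_idx M x (lab b bp \o fstV)| <= 1)%N.
  by apply: card1 (in2W fstV_inj) => i /label_bounds[].
have fstW1 : (#|orth_idx M x (lab b bp \o fstW)| <= 1)%N.
  by apply: card1 (in2W fstW_inj) => i /label_bounds[].
have snd1 : (#|orth_idx M y (lab b bp \o sndV M)|
             + #|orth_idx M y (lab b bp \o sndW M)| <= 1)%N.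
  apply: card_orth_lab2_le1 hy _ _ (@sndV_inj k) (@sndW_inj k) (@sndV_neq_sndW k) => //;
    by move=> i /label_bounds[].
apply: leq_trans (leq_add (leq_of_leqif (leq_card_setU _ _))
                          (leq_of_leqif (leq_card_setU _ _))) _.
by rewrite addnACA; apply: leq_add (leq_add fstV1 fstW1) snd1.
Qed.
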